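(* Let $\lambda \geq 0$, $0 \leq \gamma \leq 1$, $0\leq\beta<1$, $\tau \in \mathbb{C}\setminus\{0\}$ and $\delta \in \mathbb{N}_0$. Let $f(z)=z+\sum_{k=2}^{\infty}a_kz^k$ belong to $\Theta_{\Sigma}(\tau,\lambda,\gamma,\delta;\beta)$. Then $$|a_2| \leq \min\left\{\frac{2|\tau|(1-\beta)}{(\delta+1)(1+\lambda+\gamma+5\lambda\gamma)},\ 2\sqrt{\frac{|\tau|(1-\beta)}{(\delta+1)(\delta+2)\big(1+2(\lambda+\gamma+5\lambda\gamma)\big)}}\right\}$$ and $$|a_3| \leq \frac{4|\tau|(1-\beta)}{(\delta+1)(\delta+2)\big(1+2(\lambda+\gamma+5\lambda\gamma)\big)}.$$
   Context: Let $\mathbb{U}=\{z\in\mathbb{C}:|z|<1\}$. $\Sigma$ denotes the class of bi-univalent functions: functions $f(z)=z+\sum_{k=2}^\infty a_kz^k$ analytic and univalent in $\mathbb{U}$ whose inverse $f^{-1}$ extends to a univalent function $g$ on $\mathbb{U}$; this $g$ has the expansion $g(w)=w-a_2w^2+(2a_2^2-a_3)w^3-\cdots$. For $\delta\in\mathbb{N}_0$ and $h(z)=z+\sum_{k\ge2}c_kz^k$ analytic in $\mathbb{U}$, the Ruscheweyh derivative is $\mathcal{R}^\delta h(z)=z+\sum_{k=2}^{\infty}\frac{\Gamma(\delta+k)}{\Gamma(k)\Gamma(\delta+1)}c_kz^k$. For such $h$ and parameters $\lambda,\gamma,\tau\neq0,\delta$, put $$J_h(z)=1+\frac{1}{\tau}\Big[(1-\lambda)(1-\gamma)\frac{\mathcal{R}^\delta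 h(z)}{z}+(\lambda(\gamma+1)+\gamma)(\mathcal{R}^\delta h)'(z)+\lambda\gamma\big(z(\mathcal{R}^\delta h)''(z)-2\big)-1\Big].$$ For $0\le\beta<1$, $\Theta_{\Sigma}(\tau,\lambda,\gamma,\delta;\beta)$ is the set of $f\in\Sigma$ such that $\operatorname{Re}J_f(z)>\beta$ for all $z\in\mathbb{U}$ and $\operatorname{Re}J_g(w)>\beta$ for all $w\in\mathbb{U}$, where $g$ is the extension of $f^{-1}$ to $\mathbb{U}$. *)

From Stdlib Require Import Reals Factorial.
From Coquelicot Require Import Coquelicot.
Open Scope C_scope.

Definition inU (z : C) : Prop := (Cmod z < 1)%R.

(* h(z) = sum_k c_k z^k on U (this is "h analytic in U with Taylor
   coefficients c"), normalized: c_0 = 0, c_1 = 1. *)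
Definition normalized_analytic (c : nat -> C) (h : C -> C) : Prop :=
  c 0%nat = 0 /\ c 1%nat = 1 /\
  forall z, inU z -> is_series (fun k => c k * z ^ k) (h z).

Definition univalent_on_U (h : C -> C) : Prop :=
  forall z w, inU z -> inU w -> h z = h w -> z = w.

(* Bi-univalence: f (coefficients a) and g (coefficients b) are normalized,
   analytic and univalent in U, and g is the (continuation of the) inverse
   of f: near 0, g takes values in U and f (g w) = w. *)
Definition bi_univalent_pair (a : nat -> C) (f : C -> C)
    (b : nat -> C) (g : C -> C) : Prop :=
  normalized_analytic a f /\ univalent_on_U f /\
  normalized_analytic b g /\ univalent_on_U g /\
  exists r : R, (0 < r)%R /\
    forall w, (Cmod w < r)%R -> inU (g w) /\ f (g w) = w.

(* Gamma(delta+k) / (Gamma(k) Gamma(delta+1)) = (delta+k-1)! / ((k-1)! delta!)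
   for k >= 1; the k = 0 coefficient of h is 0 anyway. *)
Definition rusch_factor (delta k : nat) : R :=
  (INR (fact (delta + k - 1)) / (INR (fact (k - 1)) * INR (fact delta)))%R.

Definition rusch_coef (delta : nat) (c : nat -> C) (k : nat) : C :=
  match k with
  | O => 0
  | _ => RtoC (rusch_factor delta k) * c k
  end.

(* J_h(z), where F = R^delta h, D1 = (R^delta h)', D2 = (R^delta h)'' *)
Definition J_expr (tau : C) (lam gam : R) (F D1 D2 : C -> C) (z : C) : C :=
  1 + / tau * ( (1 - RtoC lam) * (1 - RtoC gam) * (F z / z)
              + (RtoC lam * (RtoC gam + 1) + RtoC gam) * D1 z
              + RtoC lam * RtoC gam * (z * D2 z - 2) - 1 ).

(* At z = 0 the
   quotient R^delta h(z)/z is understood by its (removable) value 1, which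
   gives J_h(0) = 1 > beta automatically; hence only z <> 0 is required. *)
Definition J_condition (tau : C) (lam gam : R) (delta : nat) (beta : R)
    (c : nat -> C) : Prop :=
  exists F D1 D2 : C -> C,
    (forall z, inU z -> is_series (fun k => rusch_coef delta c k * z ^ k) (F z)) /\
    (forall z, inU z -> is_derive F z (D1 z)) /\
    (forall z, inU z -> is_derive D1 z (D2 z)) /\
    (forall z, inU z -> z <> 0 -> (beta < Re (J_expr tau lam gam F D1 D2 z))%R).

Definition Theta_Sigma (tau : C) (lam gam : R) (delta : nat) (beta : R)
    (a : nat -> C) (f : C -> C) : Prop :=
  exists (b : nat -> C) (g : C -> C),
    bi_univalent_pair a f b g /\
    J_condition tau lam gam delta beta a /\
    J_condition tau lam gam delta beta b.

(* For h = f and for h = g, J_h is analytic in U with J_h(0) = 1 and Re J_h > beta, so by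
   the Caratheodory lemma its Taylor coefficients have modulus at most 2(1 - beta).  Its
   first two coefficients are (delta+1)(1+lam+gam+5 lam gam) c_2 / tau and
   (delta+1)(delta+2)(1+2(lam+gam+5 lam gam)) c_3 / (2 tau).  Differentiating f (g w) = w
   three times at 0 gives b_2 = -a_2 and b_3 = 2 a_2^2 - a_3, so we get bounds on |a_2|,
   |a_3| and |2 a_2^2 - a_3|, hence on |a_2|^2 by the triangle inequality.
   The Caratheodory lemma is proved without integrals: averaging h(r w^j) w^(j p) over the
   N-th roots of unity w^j keeps exactly the terms e_m r^m with N | m + p, and positivity
   of the weights 2 Re h(r w^j) - 2 beta bounds |e_k| r^k by 2(1 - beta) up to a series
   tail that vanishes as N grows; finally r tends to 1. *)

From Stdlib Require Import Reals Lra Lia Psatz.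
From Coquelicot Require Import Coquelicot.

Open Scope R_scope.
Open Scope C_scope.

(** * Finite sums and series in C *)

Lemma Cmod_RtoC_nonneg (x : R) : (0 <= x)%R -> Cmod x = x.
Proof. intros. rewrite Cmod_R. now apply Rabs_pos_eq. Qed.

Lemma RtoC_neq_0 (x : R) : x <> 0%R -> RtoC x <> 0.
Proof. intros Hx E. apply RtoC_inj in E. contradiction. Qed.

Lemma Ceq_of_mul_sub_eq_0 (c x y : C) : c <> 0 -> c * (x - y) = 0 -> x = y.
Proof.
  intros Hc E. replace x with (/ c * (c * (x - y)) + y) by (field; exact Hc).
  rewrite E. ring.
Qed.

Fixpoint Csum (n : nat) (f : nat -> C) : C :=
  match n with O => 0 | S n => Csum n f + f n end.

Lemma Csum_ext n (f g : nat -> C) : (forall j, (j < n)%nat -> f j = g j) -> Csum n f = Csum n g.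
Proof. induction n; intros H; simpl; auto. rewrite IHn, H; auto. Qed.

Lemma Csum_plus n (f g : nat -> C) : Csum n (fun j => f j + g j) = Csum n f + Csum n g.
Proof. induction n; simpl. ring. rewrite IHn. ring. Qed.

Lemma Csum_minus n (f g : nat -> C) : Csum n (fun j => f j - g j) = Csum n f - Csum n g.
Proof. induction n; simpl. ring. rewrite IHn. ring. Qed.

Lemma Csum_scal n (c : C) (f : nat -> C) : Csum n (fun j => c * f j) = c * Csum n f.
Proof. induction n; simpl. ring. rewrite IHn. ring. Qed.

Lemma Csum_const n (c : C) : Csum n (fun _ => c) = INR n * c.
Proof. induction n; simpl Csum. simpl. ring. rewrite IHn, S_INR, RtoC_plus. ring. Qed.

Lemma Csum_conj n (f : nat -> C) : Csum n (fun j => Cconj (f j)) = Cconj (Csum n f).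
Proof.
  induction n; simpl.
  - apply injective_projections; simpl; ring.
  - rewrite IHn, Cplus_conj. reflexivity.
Qed.

Lemma Csum_sum_n n (f : nat -> C) : Csum (S n) f = sum_n f n.
Proof.
  induction n.
  - rewrite sum_O. simpl. ring.
  - rewrite sum_Sn, <- IHn. reflexivity.
Qed.

Lemma Csum_single n (f : nat -> C) m0 : (m0 < n)%nat ->
  (forall m, (m < n)%nat -> m <> m0 -> f m = 0) -> Csum n f = f m0.
Proof.
  induction n; intros Hm0 H; [lia|]. simpl.
  destruct (Nat.eq_dec m0 n) as [->|Hne].
  - rewrite (Csum_ext n f (fun _ => 0)), Csum_const by (intros; apply H; lia). ring.
  - rewrite IHn, (H n); [ring | lia | auto | lia | intros m Hm; apply H; lia].
Qed.

Lemma Cmod_Csum_le n (f : nat -> C) (M : R) : (forall j, (j < n)%nat -> Cmod (f j) <= M)%R ->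
  (Cmod (Csum n f) <= INR n * M)%R.
Proof.
  induction n; intros H; simpl Csum.
  - rewrite Cmod_0. simpl. lra.
  - eapply Rle_trans. apply Cmod_triangle. rewrite S_INR.
    assert (Cmod (f n) <= M)%R by auto. assert (Cmod (Csum n f) <= INR n * M)%R by auto. lra.
Qed.

Lemma Cmod_Csum_le_Re n (f g : nat -> C) : (forall j, (j < n)%nat -> Cmod (f j) <= Re (g j))%R ->
  (Cmod (Csum n f) <= Re (Csum n g))%R.
Proof.
  induction n; intros H; simpl Csum.
  - rewrite Cmod_0. simpl. lra.
  - eapply Rle_trans. apply Cmod_triangle. simpl.
    apply Rplus_le_compat. apply IHn; auto. apply H; auto.
Qed.

Lemma Csum_geom (w : C) n : (w - 1) * Csum n (fun j => w ^ j) = w ^ n - 1.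
Proof. induction n; simpl Csum. simpl. ring. rewrite Cmult_plus_distr_l, IHn, Cpow_S. ring. Qed.

Lemma Cmod_sum_n_le (a : nat -> C) (b : nat -> R) :
  (forall n, Cmod (a n) <= b n)%R -> forall n, (Cmod (sum_n a n) <= sum_n b n)%R.
Proof.
  intros H n; induction n.
  - rewrite !sum_O. apply H.
  - rewrite !sum_Sn. eapply Rle_trans. apply Cmod_triangle.
    specialize (H (S n)). change (plus (sum_n b n) (b (S n))) with (sum_n b n + b (S n))%R. lra.
Qed.

Lemma is_series_Cmod_le (a : nat -> C) (b : nat -> R) (l : C) (L : R) :
  is_series a l -> is_series b L -> (forall n, Cmod (a n) <= b n)%R -> (Cmod l <= L)%R.
Proof.
  intros Ha Hb H.
  assert (Hn : is_lim_seq (fun n => Cmod (sum_n a n)) (Cmod l)).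
  { exact (filterlim_comp _ _ _ (sum_n a) (@norm C_AbsRing C_NormedModule) _ _ _
             Ha (filterlim_norm l)). }
  exact (is_lim_seq_le _ _ _ _ (Cmod_sum_n_le a b H) Hn (Hb : is_lim_seq (sum_n b) L)).
Qed.

Lemma is_series_C_ext (a b : nat -> C) (l1 l2 : C) :
  is_series a l1 -> (forall n, a n = b n) -> l1 = l2 -> is_series b l2.
Proof. intros H E <-. exact (is_series_ext _ _ _ E H). Qed.

Lemma is_series_C_unique (a : nat -> C) (l1 l2 : C) :
  is_series a l1 -> is_series a l2 -> l1 = l2.
Proof. apply filterlim_locally_unique. Qed.

Lemma is_series_bounded_terms (a : nat -> C) (l : C) :
  is_series a l -> exists M, forall n, (Cmod (a n) <= M)%R.
Proof.
  intros Ha.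
  destruct (filterlim_bounded (sum_n a)) as [M HM]; [exists l; apply Ha|].
  exists (2 * M)%R. intros n.
  assert (HM0 : (0 <= M)%R) by (eapply Rle_trans; [apply Cmod_ge_0 | apply (HM 0%nat)]).
  destruct n as [|n].
  - specialize (HM 0%nat). rewrite sum_O in HM. change (Cmod (a 0%nat) <= M)%R in HM. lra.
  - pose proof (HM (S n)) as H1. pose proof (HM n) as H2. rewrite sum_Sn in H1.
    change (Cmod (sum_n a n + a (S n)) <= M)%R in H1. change (Cmod (sum_n a n) <= M)%R in H2.
    replace (a (S n)) with ((sum_n a n + a (S n)) - sum_n a n) by ring.
    eapply Rle_trans; [apply Cmod_triangle|]. rewrite Cmod_opp. lra.
Qed.

Definition CSeries (a : nat -> C) : C :=
  @iota (CompleteNormedModule.CompleteSpace C_AbsRing C_CompleteNormedModule)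
    (fun x : C => is_series a x).

Lemma CSeries_correct (a : nat -> C) : ex_series a -> is_series a (CSeries a).
Proof.
  intros [l Hl]. unfold CSeries.
  assert (E : @iota (CompleteNormedModule.CompleteSpace C_AbsRing C_CompleteNormedModule)
                (fun x : C => is_series a x) = l)
    by exact (iota_filterlim_locally (sum_n a) l Hl).
  rewrite E. exact Hl.
Qed.

Lemma is_series_C_tail (a : nat -> C) (l : C) (n : nat) : (0 < n)%nat ->
  is_series a l -> is_series (fun k => a (n + k)%nat) (l - Csum n a).
Proof.
  intros Hn Ha. apply is_series_incr_n; auto.
  rewrite <- Csum_sum_n. replace (S (pred n)) with n by lia.
  apply (is_series_C_ext _ _ _ _ Ha); [reflexivity|]. unfold plus; simpl. ring.
Qed.

Lemma is_series_drop1 (a : nat -> C) (l : C) :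
  is_series a l -> is_series (fun k => a (S k)) (l - a 0%nat).
Proof.
  intros H. apply (is_series_C_ext _ _ _ _ (is_series_C_tail a l 1 ltac:(lia) H)).
  - reflexivity.
  - simpl. ring.
Qed.

Lemma is_series_C_zero : is_series (fun _ : nat => RtoC 0) (RtoC 0).
Proof.
  apply (filterlim_ext (fun _ => RtoC 0)); [|apply filterlim_const].
  intros n. rewrite <- Csum_sum_n, Csum_const. ring.
Qed.

Lemma is_series_single (k : nat) (x : C) :
  is_series (fun m => if Nat.eqb m k then x else RtoC 0) x.
Proof.
  apply (is_series_decr_n _ (S k)); [lia|].
  rewrite <- Csum_sum_n, (Csum_single _ _ k), Nat.eqb_refl.
  - apply (is_series_C_ext _ _ _ _ is_series_C_zero).
    + intros m. replace (Nat.eqb (S k + m) k) with false; auto.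
      symmetry. apply Nat.eqb_neq. lia.
    + unfold plus, opp; simpl. ring.
  - lia.
  - intros m _ Hm. apply Nat.eqb_neq in Hm. rewrite Hm. reflexivity.
Qed.

Lemma is_series_Csum (n : nat) (a : nat -> nat -> C) (l : nat -> C) :
  (forall j, (j < n)%nat -> is_series (a j) (l j)) ->
  is_series (fun m => Csum n (fun j => a j m)) (Csum n l).
Proof.
  induction n; intros H; simpl.
  - exact is_series_C_zero.
  - apply (is_series_plus (fun m => Csum n (fun j => a j m)) (a n)); auto.
Qed.

(** * Power series on the unit disk *)

Definition power_series_on_U (c : nat -> C) (F : C -> C) : Prop :=
  forall z, inU z -> is_series (fun k => c k * z ^ k) (F z).

Lemma is_series_at_0 (c : nat -> C) : is_series (fun k => c k * 0 ^ k) (c 0%nat).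
Proof.
  apply (is_series_C_ext _ _ _ _ (is_series_single 0 (c 0%nat))); [|reflexivity].
  intros [|k]; simpl; ring.
Qed.

Lemma power_series_on_U_at_0 (c : nat -> C) (F : C -> C) :
  power_series_on_U c F -> F 0 = c 0%nat.
Proof.
  intros H. apply (is_series_C_unique (fun k => c k * 0 ^ k)); [|apply is_series_at_0].
  apply H. unfold inU. rewrite Cmod_0. lra.
Qed.

Lemma CV_radius_Cmod_gt (c : nat -> C) (F : C -> C) : power_series_on_U c F ->
  forall r, (0 <= r < 1)%R -> Rbar_lt r (CV_radius (fun n => Cmod (c n))).
Proof.
  intros HF r Hr.
  set (s := ((1 + r) / 2)%R).
  assert (Hs : inU s) by (unfold inU; rewrite Cmod_RtoC_nonneg; unfold s; lra).
  destruct (is_series_bounded_terms _ _ (HF _ Hs)) as [M HM].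
  assert (Hle : Rbar_le s (CV_radius (fun n => Cmod (c n)))).
  { apply (CV_radius_bounded (fun n => Cmod (c n))). exists M. intros n.
    specialize (HM n). rewrite Cmod_mult, Cmod_pow, Cmod_RtoC_nonneg in HM by (unfold s; lra).
    rewrite Rabs_pos_eq; [exact HM|].
    apply Rmult_le_pos; [apply Cmod_ge_0 | apply pow_le; unfold s; lra]. }
  destruct (CV_radius (fun n => Cmod (c n))); simpl in *; unfold s in *; lra.
Qed.

Lemma ex_series_Cmod_pow (c : nat -> C) (F : C -> C) : power_series_on_U c F ->
  forall r, (0 <= r < 1)%R -> ex_series (fun n => Cmod (c n) * r ^ n)%R.
Proof.
  intros HF r Hr.
  pose proof (CV_disk_inside (fun n => Cmod (c n)) r) as H.
  rewrite Rabs_pos_eq in H by lra.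
  eapply ex_series_ext; [|apply H; now apply (CV_radius_Cmod_gt c F)].
  intros n. simpl. apply Rabs_pos_eq.
  apply Rmult_le_pos; [apply Cmod_ge_0 | apply pow_le; lra].
Qed.

Definition shift_coef (c : nat -> C) (k : nat) : C :=
  match k with O => 0 | S k => c k end.

Lemma is_series_mul_z (c : nat -> C) (F : C -> C) (z : C) :
  power_series_on_U c F -> inU z -> is_series (fun k => shift_coef c k * z ^ k) (z * F z).
Proof.
  intros HF Hz. apply is_series_decr_1.
  apply (is_series_C_ext _ _ _ _ (is_series_scal z _ _ (HF z Hz))).
  - intros k. change (z * (c k * z ^ k) = c k * z ^ S k). rewrite Cpow_S. ring.
  - change (z * F z = plus (z * F z) (opp (shift_coef c 0 * z ^ 0))).
    unfold plus, opp; simpl. ring.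
Qed.

Lemma is_series_div_z (c : nat -> C) (F : C -> C) (z : C) :
  power_series_on_U c F -> c 0%nat = 0 -> inU z -> z <> 0 ->
  is_series (fun k => c (S k) * z ^ k) (F z / z).
Proof.
  intros HF Hc0 Hz Hz0.
  apply (is_series_C_ext _ _ _ _ (is_series_scal (/ z) _ _ (is_series_drop1 _ _ (HF z Hz)))).
  - intros k. change (/ z * (c (S k) * z ^ S k) = c (S k) * z ^ k).
    rewrite Cpow_S. field. exact Hz0.
  - change (/ z * (F z - c 0%nat * z ^ 0) = F z / z). rewrite Hc0. field. exact Hz0.
Qed.

Definition deriv_coef (c : nat -> C) (n : nat) : C := INR (S n) * c (S n).

Definition Cderiv (c : nat -> C) (z : C) : C := CSeries (fun n => deriv_coef c n * z ^ n).

Lemma PS_derive_Cmod (c : nat -> C) n :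
  PS_derive (fun n => Cmod (c n)) n = Cmod (deriv_coef c n).
Proof.
  unfold PS_derive, deriv_coef. rewrite Cmod_mult, Cmod_RtoC_nonneg; [reflexivity|].
  apply pos_INR.
Qed.

Lemma power_series_on_U_deriv (c : nat -> C) (F : C -> C) :
  power_series_on_U c F -> power_series_on_U (deriv_coef c) (Cderiv c).
Proof.
  intros HF z Hz. apply CSeries_correct.
  assert (Hr : (0 <= Cmod z < 1)%R) by (split; [apply Cmod_ge_0 | exact Hz]).
  assert (Hrad : Rbar_lt (Cmod z) (CV_radius (PS_derive (fun n => Cmod (c n)))))
    by (rewrite CV_radius_derive; now apply (CV_radius_Cmod_gt c F)).
  rewrite <- (Rabs_pos_eq (Cmod z)) in Hrad by lra.
  pose proof (CV_disk_inside _ _ Hrad) as H.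
  refine (@ex_series_le C_AbsRing C_CompleteNormedModule _ _ _ H).
  intros n. change (norm ?x) with (Cmod x).
  rewrite Cmod_mult, Cmod_pow, PS_derive_Cmod. apply Rle_abs.
Qed.

Definition pow_remainder (y z : C) (n : nat) : C :=
  y ^ (S (S n)) - z ^ (S (S n)) - INR (S (S n)) * (y - z) * z ^ (S n).

Lemma pow_remainder_S y z n : pow_remainder y z (S n) =
  y * pow_remainder y z n + INR (S (S n)) * ((y - z) * (y - z)) * z ^ (S n).
Proof.
  unfold pow_remainder. rewrite (S_INR (S (S n))), RtoC_plus. simpl. ring.
Qed.

Lemma Cmod_pow_remainder_le (y z : C) (rho : R) :
  (Cmod y <= rho)%R -> (Cmod z <= rho)%R -> forall n,
  (Cmod (pow_remainder y z n)
     <= INR (S n) * INR (S (S n)) / 2 * (Cmod (y - z) ^ 2 * rho ^ n))%R.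
Proof.
  intros Hy Hz. assert (Hr : (0 <= rho)%R) by (pose proof (Cmod_ge_0 y); lra).
  set (h := Cmod (y - z)). assert (Hh : (0 <= h)%R) by apply Cmod_ge_0.
  induction n.
  - unfold pow_remainder. replace (y ^ 2 - z ^ 2 - INR 2 * (y - z) * z ^ 1) with ((y - z) * (y - z))
      by (simpl; rewrite RtoC_plus; ring).
    rewrite Cmod_mult. simpl. fold h. lra.
  - rewrite pow_remainder_S. eapply Rle_trans; [apply Cmod_triangle|].
    rewrite !Cmod_mult, Cmod_pow, Cmod_RtoC_nonneg by apply pos_INR. fold h.
    assert (H1 : (Cmod y * Cmod (pow_remainder y z n)
                  <= rho * (INR (S n) * INR (S (S n)) / 2 * (h ^ 2 * rho ^ n)))%R)
      by (apply Rmult_le_compat; auto using Cmod_ge_0).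
    assert (H2 : (Cmod z ^ S n <= rho ^ S n)%R) by (apply pow_incr; split; auto using Cmod_ge_0).
    assert (H3 : (INR (S (S n)) * (h * h) * Cmod z ^ S n <= INR (S (S n)) * (h * h) * rho ^ S n)%R)
      by (apply Rmult_le_compat_l; [apply Rmult_le_pos; [apply pos_INR | nra] | auto]).
    replace (INR (S (S n)) * INR (S (S (S n))) / 2 * (h ^ 2 * rho ^ S n))%R with
      (rho * (INR (S n) * INR (S (S n)) / 2 * (h ^ 2 * rho ^ n))
       + INR (S (S n)) * (h * h) * rho ^ S n)%R
      by (rewrite !S_INR; simpl; field).
    lra.
Qed.

Lemma is_series_power_remainder (c : nat -> C) (F : C -> C) (y z : C) :
  power_series_on_U c F -> inU y -> inU z ->
  is_series (fun n => c (S (S n)) * pow_remainder y z n) (F y - F z - (y - z) * Cderiv c z).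
Proof.
  intros HF Hy Hz.
  pose proof (is_series_drop1 _ _ (is_series_drop1 _ _ (HF y Hy))) as H1.
  pose proof (is_series_drop1 _ _ (is_series_drop1 _ _ (HF z Hz))) as H2.
  pose proof (is_series_drop1 _ _ (power_series_on_U_deriv c F HF z Hz)) as H3.
  pose proof (is_series_minus _ _ _ _ (is_series_minus _ _ _ _ H1 H2)
                (is_series_scal (y - z) _ _ H3)) as H.
  apply (is_series_C_ext _ _ _ _ H).
  - intros n. unfold pow_remainder, deriv_coef. simpl. unfold plus, opp, scal; simpl.
    unfold mult; simpl. ring.
  - unfold deriv_coef. unfold plus, opp, scal; simpl. unfold mult; simpl. ring.
Qed.

Lemma is_derive_of_remainder_le (F : C -> C) (z l : C) :
  (forall eps, (0 < eps)%R -> exists d, (0 < d)%R /\ forall y, (Cmod (y - z) < d)%R ->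
     (Cmod (F y - F z - (y - z) * l) <= eps * Cmod (y - z))%R) ->
  is_derive F z l.
Proof.
  intros H. split; [apply is_linear_scal_l|].
  intros x Hx eps.
  assert (Ez : z = x)
    by exact (@is_filter_lim_locally_unique C_AbsRing (AbsRing_NormedModule C_AbsRing) _ _ Hx).
  subst x. destruct (H eps (cond_pos eps)) as [d [Hd Hb]].
  exists (mkposreal d Hd). intros y Hy. apply Hb. exact Hy.
Qed.

Lemma Cmod_power_remainder_le (c : nat -> C) (F : C -> C) (y z : C) (rho K : R) :
  power_series_on_U c F -> (Cmod z < rho < 1)%R -> (Cmod y <= rho)%R ->
  is_series (fun n => Rabs (PS_derive (PS_derive (fun n => Cmod (c n))) n * rho ^ n)) K ->
  (Cmod (F y - F z - (y - z) * Cderiv c z) <= Cmod (y - z) ^ 2 / 2 * K)%R.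
Proof.
  intros HF Hrho Hy HK.
  apply (is_series_Cmod_le _ _ _ _
           (is_series_power_remainder c F y z HF ltac:(unfold inU; lra) ltac:(unfold inU; lra))
           (is_series_scal _ _ _ HK)).
  intros n. change (Cmod (c (S (S n)) * pow_remainder y z n)
    <= Cmod (y - z) ^ 2 / 2 * Rabs (PS_derive (PS_derive (fun n => Cmod (c n))) n * rho ^ n))%R.
  rewrite Cmod_mult. eapply Rle_trans.
  - apply Rmult_le_compat_l; [apply Cmod_ge_0|].
    exact (Cmod_pow_remainder_le y z rho Hy (Rlt_le _ _ (proj1 Hrho)) n).
  - unfold PS_derive. rewrite Rabs_pos_eq; [right; field|].
    assert (0 <= rho)%R by (pose proof (Cmod_ge_0 z); lra).
    repeat apply Rmult_le_pos; auto using pos_INR, Cmod_ge_0, pow_le.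
Qed.

(* Coquelicot differentiates power series only over R, so the complex case is done by hand:
   the remainder F y - F z - (y - z) F'(z) is O(|y - z|^2) uniformly on a smaller disk. *)
Lemma is_derive_power_series (c : nat -> C) (F : C -> C) (z : C) :
  power_series_on_U c F -> inU z -> is_derive F z (Cderiv c z).
Proof.
  intros HF Hz.
  set (rho := ((1 + Cmod z) / 2)%R).
  assert (Hz0 : (0 <= Cmod z)%R) by apply Cmod_ge_0.
  assert (Hrho : (Cmod z < rho < 1)%R) by (unfold inU in Hz; unfold rho; lra).
  set (b := fun n => Rabs (PS_derive (PS_derive (fun n => Cmod (c n))) n * rho ^ n)).
  assert (HK : is_series b (Series b)).
  { apply Series_correct, CV_disk_inside. rewrite !CV_radius_derive, Rabs_pos_eq by lra.
    apply (CV_radius_Cmod_gt c F HF). lra. }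
  set (K := Series b) in HK.
  assert (HK1 : (0 <= Rabs K)%R) by apply Rabs_pos.
  assert (HK0 : (K <= Rabs K)%R) by apply Rle_abs.
  apply is_derive_of_remainder_le. intros eps Heps.
  exists (Rmin (rho - Cmod z) (eps / (Rabs K + 1))).
  split; [apply Rmin_pos; [lra | apply Rdiv_lt_0_compat; lra]|].
  intros y Hy.
  pose proof (Rmin_l (rho - Cmod z) (eps / (Rabs K + 1))) as Hm1.
  pose proof (Rmin_r (rho - Cmod z) (eps / (Rabs K + 1))) as Hm2.
  set (h := Cmod (y - z)) in *.
  assert (Hh0 : (0 <= h)%R) by apply Cmod_ge_0.
  assert (Hyr : (Cmod y <= rho)%R).
  { replace y with (z + (y - z)) by ring. eapply Rle_trans; [apply Cmod_triangle|]. fold h. lra. }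
  pose proof (Cmod_power_remainder_le c F y z rho K HF Hrho Hyr HK) as Hrem.
  assert (Hh : (h * (Rabs K + 1) <= eps)%R) by (apply Rle_div_r; lra).
  fold h in Hrem. nra.
Qed.

(** * Roots of unity *)

Definition unit_root (N : nat) : C := (cos (2 * PI / INR N), sin (2 * PI / INR N)).

Lemma unit_root_pow N j :
  unit_root N ^ j = (cos (INR j * (2 * PI / INR N)), sin (INR j * (2 * PI / INR N))).
Proof.
  induction j.
  - simpl. rewrite !Rmult_0_l, cos_0, sin_0. reflexivity.
  - rewrite Cpow_S, IHj. unfold unit_root, Cmult; simpl fst; simpl snd.
    rewrite S_INR, Rmult_plus_distr_r, Rmult_1_l, cos_plus, sin_plus.
    f_equal; ring.
Qed.

Lemma unit_root_pow_mul_N N q : (0 < N)%nat -> unit_root N ^ (N * q) = 1.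
Proof.
  intros HN. rewrite Cpow_mult_r, unit_root_pow.
  replace (INR N * (2 * PI / INR N))%R with (2 * PI)%R by (field; apply not_0_INR; lia).
  rewrite cos_2PI, sin_2PI. apply Cpow_1_l.
Qed.

Lemma unit_root_pow_neq_1 N s : (0 < s < N)%nat -> unit_root N ^ s <> 1.
Proof.
  intros Hs E. rewrite unit_root_pow in E. apply (f_equal fst) in E. simpl in E.
  set (x := (INR s * (2 * PI / INR N) / 2)%R).
  assert (Hx : (0 < x < PI)%R).
  { assert (0 < INR s)%R by (apply lt_0_INR; lia).
    assert (INR s < INR N)%R by (apply lt_INR; lia). pose proof PI_RGT_0.
    replace x with (PI * (INR s / INR N))%R by (unfold x; field; lra).
    split; [apply Rmult_lt_0_compat, Rdiv_lt_0_compat; lra|].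
    rewrite <- (Rmult_1_r PI) at 2. apply Rmult_lt_compat_l; [lra|].
    apply Rlt_div_l; lra. }
  replace (INR s * (2 * PI / INR N))%R with (2 * x)%R in E by (unfold x; lra).
  rewrite cos_2a_sin in E. pose proof (sin_gt_0 x (proj1 Hx) (proj2 Hx)). nra.
Qed.

Lemma Cmod_unit_root_pow N j : Cmod (unit_root N ^ j) = 1%R.
Proof.
  rewrite unit_root_pow. unfold Cmod. simpl fst; simpl snd.
  rewrite <- sqrt_1. f_equal.
  pose proof (sin2_cos2 (INR j * (2 * PI / INR N))) as H. unfold Rsqr in H. simpl. lra.
Qed.

Lemma Cconj_unit_root_pow N j : (0 < N)%nat ->
  Cconj (unit_root N ^ j) = unit_root N ^ ((N - 1) * j).
Proof.
  intros HN.
  assert (H1 : unit_root N ^ j * Cconj (unit_root N ^ j) = 1).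
  { rewrite <- Cmod2_conj, Cmod_unit_root_pow. apply injective_projections; simpl; ring. }
  assert (H2 : unit_root N ^ j * unit_root N ^ ((N - 1) * j) = 1).
  { rewrite <- Cpow_add_r. replace (j + (N - 1) * j)%nat with (N * j)%nat by nia.
    now apply unit_root_pow_mul_N. }
  assert (H0 : unit_root N ^ j <> 0)
    by (intros E; pose proof (Cmod_unit_root_pow N j) as Hm; rewrite E, Cmod_0 in Hm; lra).
  rewrite <- (Cmult_1_l (Cconj _)), <- H2, (Cmult_comm (unit_root N ^ j)), <- Cmult_assoc, H1.
  ring.
Qed.

Definition root_sum (N t : nat) : C := Csum N (fun j => unit_root N ^ (j * t)).

Lemma root_sum_mul_N N q : (0 < N)%nat -> root_sum N (q * N) = INR N.
Proof.
  intros HN. unfold root_sum. rewrite (Csum_ext N _ (fun _ => 1)), Csum_const; [ring|].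
  intros j _. replace (j * (q * N))%nat with (N * (j * q))%nat by lia.
  now apply unit_root_pow_mul_N.
Qed.

Lemma root_sum_residue N q s : (0 < s < N)%nat -> root_sum N (q * N + s) = 0.
Proof.
  intros Hs.
  set (w := unit_root N ^ (q * N + s)).
  assert (Hw : w = unit_root N ^ s).
  { unfold w. rewrite Cpow_add_r, Nat.mul_comm, unit_root_pow_mul_N by lia. ring. }
  assert (HwN : w ^ N = 1).
  { unfold w. rewrite <- Cpow_mult_r, Nat.mul_comm. apply unit_root_pow_mul_N. lia. }
  assert (Hw1 : w - 1 <> 0).
  { rewrite Hw. intros E. apply (unit_root_pow_neq_1 N s Hs).
    rewrite <- (Cplus_0_l 1), <- E. ring. }
  pose proof (Csum_geom w N) as Hg. rewrite HwN in Hg.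
  unfold root_sum. rewrite (Csum_ext N _ (fun j => w ^ j)).
  - replace (Csum N (fun j => w ^ j)) with (/ (w - 1) * ((w - 1) * Csum N (fun j => w ^ j)))
      by (field; exact Hw1).
    rewrite Hg. ring.
  - intros j _. unfold w. rewrite <- Cpow_mult_r. f_equal. lia.
Qed.

Lemma root_sum_small N s : (0 < s < N)%nat -> root_sum N s = 0.
Proof. exact (root_sum_residue N 0 s). Qed.

Lemma Cmod_root_sum_le N t : (Cmod (root_sum N t) <= INR N)%R.
Proof.
  unfold root_sum. rewrite <- (Rmult_1_r (INR N)). apply Cmod_Csum_le.
  intros j _. rewrite Cmod_unit_root_pow. lra.
Qed.

(** * The Caratheodory coefficient bound *)

Definition root_average (h : C -> C) (r : R) (N p : nat) : C :=
  Csum N (fun j => h (r * unit_root N ^ j) * unit_root N ^ (j * p)).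

Lemma inU_root_circle (r : R) N j : (0 <= r < 1)%R -> inU (r * unit_root N ^ j).
Proof.
  intros Hr. unfold inU. rewrite Cmod_mult, Cmod_unit_root_pow, Cmod_RtoC_nonneg; lra.
Qed.

Lemma is_series_root_average (e : nat -> C) (h : C -> C) (r : R) (N p : nat) :
  power_series_on_U e h -> (0 <= r < 1)%R ->
  is_series (fun m => e m * r ^ m * root_sum N (m + p)) (root_average h r N p).
Proof.
  intros He Hr.
  apply (is_series_C_ext _ _ _ _
    (is_series_Csum N (fun j m => unit_root N ^ (j * p) * (e m * (r * unit_root N ^ j) ^ m)) _
      (fun j _ => is_series_scal _ _ _ (He _ (inU_root_circle r N j Hr))))).
  - intros m. unfold root_sum. rewrite <- Csum_scal. apply Csum_ext. intros j _.
    change (unit_root N ^ (j * p) * (e m * (r * unit_root N ^ j) ^ m)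
            = e m * r ^ m * unit_root N ^ (j * (m + p))).
    rewrite Cpow_mult_l, <- Cpow_mult_r, Nat.mul_add_distr_l, Cpow_add_r. ring.
  - unfold root_average. apply Csum_ext. intros j _. apply Cmult_comm.
Qed.

Definition root_series_head (e : nat -> C) (r : R) (N n p : nat) : C :=
  Csum n (fun m => e m * r ^ m * root_sum N (m + p)).

Lemma Cmod_root_average_sub_head_le (e : nat -> C) (h : C -> C) (r : R) (N p n : nat) (T : R) :
  power_series_on_U e h -> (0 <= r < 1)%R -> (0 < n)%nat ->
  is_series (fun k => Cmod (e (n + k)%nat) * r ^ (n + k))%R T ->
  (Cmod (root_average h r N p - root_series_head e r N n p) <= INR N * T)%R.
Proof.
  intros He Hr Hn HT.
  apply (is_series_Cmod_le _ _ _ _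
           (is_series_C_tail _ _ n Hn (is_series_root_average e h r N p He Hr))
           (is_series_scal (INR N) _ _ HT : is_series _ (INR N * T)%R)).
  intros k. change (Cmod (e (n + k)%nat * r ^ (n + k) * root_sum N (n + k + p))%C
                    <= INR N * (Cmod (e (n + k)%nat) * r ^ (n + k)))%R.
  rewrite !Cmod_mult, Cmod_pow, Cmod_RtoC_nonneg by lra.
  pose proof (Cmod_root_sum_le N (n + k + p)).
  assert (0 <= Cmod (e (n + k)%nat) * r ^ (n + k))%R
    by (apply Rmult_le_pos; [apply Cmod_ge_0 | apply pow_le; lra]).
  nra.
Qed.

(* The weights 2 Re h(r w^j) - 2 beta are nonnegative, so the weighted sum of unimodular
   numbers is dominated by the sum of the weights. *)
Lemma Cmod_root_average_combination_le (h : C -> C) (beta r : R) (N k : nat) :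
  (forall z, inU z -> z <> 0 -> (beta < Re (h z))%R) -> (0 < r < 1)%R -> (0 < k < N)%nat ->
  (Cmod (root_average h r N ((N - 1) * k) + Cconj (root_average h r N k))%C
     <= 2 * Re (root_average h r N 0) - 2 * beta * INR N)%R.
Proof.
  intros Hpos Hr Hk.
  set (z := fun j => r * unit_root N ^ j).
  set (Q := fun j => h (z j) + Cconj (h (z j)) - 2 * beta).
  assert (HQ : forall j, Q j = RtoC (2 * Re (h (z j)) - 2 * beta)).
  { intros j. unfold Q. destruct (h (z j)) as [u v].
    unfold Cminus, Cplus, Copp, Cmult, Cconj, Re, RtoC; simpl. f_equal; ring. }
  assert (Hweights : forall j, (0 <= 2 * Re (h (z j)) - 2 * beta)%R).
  { intros j. assert (Hz : inU (z j)) by (apply inU_root_circle; lra).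
    assert (Hz0 : z j <> 0).
    { intros E. apply (f_equal Cmod) in E. unfold z in E.
      rewrite Cmod_mult, Cmod_unit_root_pow, Cmod_RtoC_nonneg, Cmod_0 in E; lra. }
    pose proof (Hpos _ Hz Hz0). lra. }
  assert (Hzero : root_sum N ((N - 1) * k) = 0).
  { replace ((N - 1) * k)%nat with ((k - 1) * N + (N - k))%nat by nia.
    apply root_sum_residue. lia. }
  assert (E : (root_average h r N ((N - 1) * k) + Cconj (root_average h r N k))%C
              = Csum N (fun j => Q j * unit_root N ^ (j * ((N - 1) * k)))).
  { unfold root_average. rewrite <- Csum_conj.
    rewrite (Csum_ext N (fun j => Q j * _)
      (fun j => (h (z j) * unit_root N ^ (j * ((N - 1) * k))
                 + Cconj (h (z j) * unit_root N ^ (j * k)))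
                - 2 * beta * unit_root N ^ (j * ((N - 1) * k)))).
    - rewrite Csum_minus, Csum_plus, Csum_scal. fold (root_sum N ((N - 1) * k)).
      rewrite Hzero. unfold z. ring.
    - intros j _. unfold Q. rewrite Cmult_conj, Cconj_unit_root_pow by lia.
      replace ((N - 1) * (j * k))%nat with (j * ((N - 1) * k))%nat by ring. ring. }
  rewrite E. eapply Rle_trans.
  - apply (Cmod_Csum_le_Re N _ Q). intros j _.
    rewrite Cmod_mult, Cmod_unit_root_pow, Rmult_1_r, HQ, Cmod_RtoC_nonneg by apply Hweights.
    simpl. lra.
  - unfold Q. rewrite Csum_minus, Csum_plus, Csum_conj, Csum_const.
    unfold root_average. simpl.
    rewrite (Csum_ext N (fun j => h (z j))
               (fun j => h (r * unit_root N ^ j) * unit_root N ^ (j * 0)))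
      by (intros j _; rewrite Nat.mul_0_r; unfold z; simpl; ring).
    unfold Re. lra.
Qed.

Section RootSeriesHeads.

Variables (e : nat -> C) (r : R) (N k : nat).
Hypotheses (Hk : (0 < k)%nat) (HN : (2 * k < N)%nat).

Lemma root_series_head_main :
  root_series_head e r N (N - k) ((N - 1) * k) = INR N * (e k * r ^ k).
Proof.
  unfold root_series_head. rewrite (Csum_single _ _ k); [|lia|].
  - replace (k + (N - 1) * k)%nat with (k * N)%nat by nia.
    rewrite root_sum_mul_N by lia. ring.
  - intros m Hm Hmk. destruct (Nat.lt_ge_cases m k).
    + replace (m + (N - 1) * k)%nat with ((k - 1) * N + (N + m - k))%nat by nia.
      rewrite root_sum_residue by lia. ring.
    + replace (m + (N - 1) * k)%nat with (k * N + (m - k))%nat by nia.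
      rewrite root_sum_residue by lia. ring.
Qed.

Lemma root_series_head_conj : root_series_head e r N (N - k) k = 0.
Proof.
  unfold root_series_head. rewrite (Csum_single _ _ 0); [|lia|].
  - rewrite root_sum_small by lia. ring.
  - intros m Hm _. rewrite root_sum_small by lia. ring.
Qed.

Lemma root_series_head_mean : e 0%nat = 1 -> root_series_head e r N (N - k) 0 = INR N.
Proof.
  intros He0. unfold root_series_head. rewrite (Csum_single _ _ 0); [|lia|].
  - change (0 + 0)%nat with (0 * N)%nat. rewrite root_sum_mul_N, He0 by lia. simpl. ring.
  - intros m Hm Hm0. rewrite root_sum_small by lia. ring.
Qed.

End RootSeriesHeads.

Lemma caratheodory_approx (e : nat -> C) (h : C -> C) (beta r : R) (N k : nat) (T : R) :
  power_series_on_U e h -> e 0%nat = 1 ->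
  (forall z, inU z -> z <> 0 -> (beta < Re (h z))%R) ->
  (0 < r < 1)%R -> (0 < k)%nat -> (2 * k < N)%nat ->
  is_series (fun m => Cmod (e (N - k + m)%nat) * r ^ (N - k + m))%R T ->
  (Cmod (e k) * r ^ k <= 2 * (1 - beta) + 4 * T)%R.
Proof.
  intros He He0 Hpos Hr Hk HN HT.
  pose proof (fun p => Cmod_root_average_sub_head_le e h r N p (N - k) T He
                         ltac:(lra) ltac:(lia) HT) as Htail.
  pose proof (Htail ((N - 1) * k)%nat) as B1. rewrite root_series_head_main in B1 by lia.
  pose proof (Htail k) as B2. rewrite root_series_head_conj in B2 by lia.
  replace (root_average h r N k - 0) with (root_average h r N k) in B2 by ring.
  pose proof (Htail 0%nat) as B3. rewrite root_series_head_mean in B3 by (lia || exact He0).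
  pose proof (Cmod_root_average_combination_le h beta r N k Hpos Hr ltac:(lia)) as B4.
  set (A1 := root_average h r N ((N - 1) * k)) in *.
  set (A2 := root_average h r N k) in *.
  set (C0 := root_average h r N 0) in *.
  assert (Hmain : (INR N * (Cmod (e k) * r ^ k) <= Cmod A1 + INR N * T)%R).
  { replace (INR N * (Cmod (e k) * r ^ k))%R with (Cmod (INR N * (e k * r ^ k)))
      by (rewrite !Cmod_mult, Cmod_pow, !Cmod_RtoC_nonneg by (auto using pos_INR; lra); ring).
    replace (INR N * (e k * r ^ k)) with (A1 - (A1 - INR N * (e k * r ^ k))) by ring.
    eapply Rle_trans; [apply Cmod_triangle|]. rewrite Cmod_opp. lra. }
  assert (HA1 : (Cmod A1 <= Cmod (A1 + Cconj A2) + Cmod A2)%R).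
  { replace A1 with ((A1 + Cconj A2) - Cconj A2) at 1 by ring.
    eapply Rle_trans; [apply Cmod_triangle|]. rewrite Cmod_opp, Cmod_conj. lra. }
  assert (HC0 : (Re C0 <= INR N + INR N * T)%R).
  { pose proof (re_le_Cmod (C0 - INR N)) as H. pose proof (Rle_abs (Re (C0 - INR N))).
    unfold Re in *; simpl in *. lra. }
  assert (HN0 : (0 < INR N)%R) by (apply lt_0_INR; lia).
  apply (Rmult_le_reg_l (INR N)); [exact HN0|]. lra.
Qed.

Lemma caratheodory_coef_bound_r (e : nat -> C) (h : C -> C) (beta r : R) (k : nat) :
  power_series_on_U e h -> e 0%nat = 1 ->
  (forall z, inU z -> z <> 0 -> (beta < Re (h z))%R) ->
  (0 < r < 1)%R -> (0 < k)%nat ->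
  (Cmod (e k) * r ^ k <= 2 * (1 - beta))%R.
Proof.
  intros He He0 Hpos Hr Hk.
  set (a := fun m => (Cmod (e m) * r ^ m)%R).
  assert (HS : is_series a (Series a))
    by (apply Series_correct, (ex_series_Cmod_pow e h He); lra).
  apply Rle_plus_epsilon. intros eps Heps.
  assert (Heps4 : (0 < eps / 4)%R) by lra.
  destruct (HS _ (locally_ball (Series a) (mkposreal _ Heps4))) as [N0 HN0].
  set (N := (N0 + 2 * k + 2)%nat).
  set (T := (Series a - sum_n a (pred (N - k)))%R).
  assert (HT : is_series (fun m => a (N - k + m)%nat) T).
  { apply is_series_incr_n; [lia|].
    replace (plus T _) with (Series a); [exact HS|]. unfold T, plus; simpl.
    change (Series a = Series a - sum_n a (pred (N - k)) + sum_n a (pred (N - k)))%R. ring. }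
  assert (HTeps : (T < eps / 4)%R).
  { specialize (HN0 (pred (N - k)) ltac:(unfold N; lia)).
    change (Rabs (sum_n a (pred (N - k)) - Series a) < eps / 4)%R in HN0.
    apply Rabs_def2 in HN0. unfold T. lra. }
  pose proof (caratheodory_approx e h beta r N k T He He0 Hpos Hr Hk ltac:(unfold N; lia) HT).
  lra.
Qed.

Lemma pow_ge_1_sub_mul (r : R) (k : nat) : (0 <= r <= 1)%R -> (1 - INR k * (1 - r) <= r ^ k)%R.
Proof.
  intros Hr. induction k.
  - simpl. lra.
  - rewrite S_INR. change (r ^ S k)%R with (r * r ^ k)%R.
    assert (r * (1 - INR k * (1 - r)) <= r * r ^ k)%R by (apply Rmult_le_compat_l; lra).
    assert (0 <= INR k * ((1 - r) * (1 - r)))%R by (apply Rmult_le_pos; [apply pos_INR | nra]).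
    nra.
Qed.

Lemma le_of_pow_mul_le (x c : R) (k : nat) : (0 <= x)%R ->
  (forall r, (0 < r < 1)%R -> x * r ^ k <= c)%R -> (x <= c)%R.
Proof.
  intros Hx H. apply Rle_plus_epsilon. intros eps Heps.
  assert (HK : (0 < x * INR k + 1)%R) by (pose proof (pos_INR k); nra).
  set (d := Rmin (1 / 2) (eps / (x * INR k + 1))).
  assert (Hd : (0 < d <= 1 / 2)%R)
    by (split; [apply Rmin_pos; [lra | apply Rdiv_lt_0_compat; lra] | apply Rmin_l]).
  assert (Hdk : (x * INR k * d <= eps)%R).
  { assert (d * (x * INR k + 1) <= eps)%R by (apply Rle_div_r; [lra | apply Rmin_r]).
    assert (0 <= d)%R by lra. nra. }
  pose proof (H (1 - d)%R ltac:(lra)) as Hc.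
  pose proof (pow_ge_1_sub_mul (1 - d) k ltac:(lra)) as Hb.
  nra.
Qed.

Theorem caratheodory_coef_bound (e : nat -> C) (h : C -> C) (beta : R) (k : nat) :
  power_series_on_U e h -> e 0%nat = 1 ->
  (forall z, inU z -> z <> 0 -> (beta < Re (h z))%R) ->
  (0 < k)%nat -> (Cmod (e k) <= 2 * (1 - beta))%R.
Proof.
  intros He He0 Hpos Hk. apply (le_of_pow_mul_le _ _ k (Cmod_ge_0 _)).
  intros r Hr. exact (caratheodory_coef_bound_r e h beta r k He He0 Hpos Hr Hk).
Qed.

(** * Coefficients of the inverse function *)

Lemma is_derive_C_unique (F : C -> C) (z l1 l2 : C) :
  is_derive F z l1 -> is_derive F z l2 -> l1 = l2.
Proof.
  intros H1 H2. now rewrite <- (is_C_derive_unique F z l1 H1), (is_C_derive_unique F z l2 H2).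
Qed.

(* Coquelicot's product and composition rules are stated for the normed module
   [AbsRing_NormedModule C_AbsRing], which is not convertible to [C_NormedModule]. *)
Local Notation is_Kderive := (@is_derive C_AbsRing (AbsRing_NormedModule C_AbsRing)).

Lemma is_Kderive_of_C (F : C -> C) z l : is_derive F z l -> is_Kderive F z l.
Proof. intros [_ H]. split; [apply is_linear_scal_l | exact H]. Qed.

Lemma is_C_derive_of_K (F : C -> C) z l : is_Kderive F z l -> is_derive F z l.
Proof. intros [_ H]. split; [apply is_linear_scal_l | exact H]. Qed.

Lemma locally_Cmod_lt (z : C) (rho : R) : (Cmod z < rho)%R ->
  @locally (AbsRing_UniformSpace C_AbsRing) z (fun t => Cmod t < rho)%R.
Proof.
  intros Hz. assert (H : (0 < rho - Cmod z)%R) by lra.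
  exists (mkposreal _ H). intros t Ht. change (Cmod (t - z) < rho - Cmod z)%R in Ht.
  replace t with (z + (t - z)) by ring. eapply Rle_lt_trans; [apply Cmod_triangle | lra].
Qed.

Lemma is_Kderive_ext_disk (F G : C -> C) (rho : R) (w l l' : C) :
  (forall t, Cmod t < rho -> F t = G t)%R -> (Cmod w < rho)%R ->
  is_Kderive F w l -> is_Kderive G w l' -> l = l'.
Proof.
  intros E Hw HF HG. apply (is_derive_C_unique G w); apply is_C_derive_of_K; [|exact HG].
  apply (@is_derive_ext_loc C_AbsRing (AbsRing_NormedModule C_AbsRing) F); [|exact HF].
  exact (filter_imp _ _ E (locally_Cmod_lt w rho Hw)).
Qed.

Lemma Cderiv_at_0 (c : nat -> C) (F : C -> C) :
  power_series_on_U c F -> Cderiv c 0 = deriv_coef c 0.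
Proof. intros H. exact (power_series_on_U_at_0 _ _ (power_series_on_U_deriv c F H)). Qed.

Section InverseCoefficients.

Variables (a b : nat -> C) (f g : C -> C) (rho : R).
Hypotheses (Hf : power_series_on_U a f) (Hg : power_series_on_U b g)
  (Ha1 : a 1%nat = 1) (Hb0 : b 0%nat = 0) (Hb1 : b 1%nat = 1)
  (Hrho : (0 < rho <= 1)%R)
  (Hinv : forall w, (Cmod w < rho)%R -> inU (g w) /\ f (g w) = w).

Local Notation f1 := (Cderiv a).
Local Notation f2 := (Cderiv (deriv_coef a)).
Local Notation f3 := (Cderiv (deriv_coef (deriv_coef a))).
Local Notation g1 := (Cderiv b).
Local Notation g2 := (Cderiv (deriv_coef b)).
Local Notation g3 := (Cderiv (deriv_coef (deriv_coef b))).

Let Hf1 := power_series_on_U_deriv a f Hf.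
Let Hf2 := power_series_on_U_deriv _ _ Hf1.
Let Hg1 := power_series_on_U_deriv b g Hg.
Let Hg2 := power_series_on_U_deriv _ _ Hg1.

Lemma inverse_disk_in_U w : (Cmod w < rho)%R -> inU w.
Proof. unfold inU. lra. Qed.

Lemma is_Kderive_comp_g (F : C -> C) (c : nat -> C) w :
  power_series_on_U c F -> (Cmod w < rho)%R ->
  is_Kderive (fun t => F (g t)) w (g1 w * Cderiv c (g w)).
Proof.
  intros HF Hw. destruct (Hinv w Hw) as [Hgw _].
  exact (@is_derive_comp C_AbsRing (AbsRing_NormedModule C_AbsRing) F g w _ _
           (is_Kderive_of_C _ _ _ (is_derive_power_series c F _ HF Hgw))
           (is_Kderive_of_C _ _ _ (is_derive_power_series b g _ Hg (inverse_disk_in_U w Hw)))).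
Qed.

Lemma inverse_chain_1 w : (Cmod w < rho)%R -> g1 w * f1 (g w) = 1.
Proof.
  intros Hw. apply (is_Kderive_ext_disk (fun t => f (g t)) (fun t => t) rho w); auto.
  - intros t Ht. apply Hinv, Ht.
  - exact (is_Kderive_comp_g f a w Hf Hw).
  - exact (@is_derive_id C_AbsRing w).
Qed.

Lemma inverse_chain_2 w : (Cmod w < rho)%R ->
  g2 w * f1 (g w) + g1 w * (g1 w * f2 (g w)) = 0.
Proof.
  intros Hw. apply (is_Kderive_ext_disk (fun t => g1 t * f1 (g t)) (fun _ => 1) rho w); auto.
  - exact inverse_chain_1.
  - apply (is_derive_mult g1 (fun t => f1 (g t))); [| | exact Cmult_comm].
    + exact (is_Kderive_of_C _ _ _ (is_derive_power_series _ _ _ Hg1 (inverse_disk_in_U w Hw))).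
    + exact (is_Kderive_comp_g f1 _ w Hf1 Hw).
  - exact (@is_derive_const C_AbsRing (AbsRing_NormedModule C_AbsRing) (RtoC 1) w).
Qed.

Lemma inverse_chain_3 :
  (g3 0 * f1 (g 0) + g2 0 * (g1 0 * f2 (g 0)))
  + (g2 0 * (g1 0 * f2 (g 0)) + g1 0 * (g2 0 * f2 (g 0) + g1 0 * (g1 0 * f3 (g 0)))) = 0.
Proof.
  assert (H0 : (Cmod 0 < rho)%R) by (rewrite Cmod_0; lra).
  assert (Dseries : forall c F, power_series_on_U c F -> is_Kderive F (RtoC 0) (Cderiv c 0))
    by (intros c F H; exact (is_Kderive_of_C _ _ _
                               (is_derive_power_series c F _ H (inverse_disk_in_U _ H0)))).
  apply (is_Kderive_ext_disk _ (fun _ => RtoC 0) rho (RtoC 0) _ _ inverse_chain_2 H0).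
  - apply (@is_derive_plus C_AbsRing (AbsRing_NormedModule C_AbsRing)).
    + apply (is_derive_mult g2 (fun t => f1 (g t))); [apply Dseries, Hg2 | | exact Cmult_comm].
      exact (is_Kderive_comp_g f1 _ _ Hf1 H0).
    + apply (is_derive_mult g1 (fun t => g1 t * f2 (g t))); [apply Dseries, Hg1 | | exact Cmult_comm].
      apply (is_derive_mult g1 (fun t => f2 (g t))); [apply Dseries, Hg1 | | exact Cmult_comm].
      exact (is_Kderive_comp_g f2 _ _ Hf2 H0).
  - exact (@is_derive_const C_AbsRing (AbsRing_NormedModule C_AbsRing) (RtoC 0) (RtoC 0)).
Qed.

Lemma inverse_values_at_0 :
  g 0 = 0 /\ f1 0 = 1 /\ f2 0 = 2 * a 2%nat /\ f3 0 = 6 * a 3%nat /\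
  g1 0 = 1 /\ g2 0 = 2 * b 2%nat /\ g3 0 = 6 * b 3%nat.
Proof.
  rewrite (power_series_on_U_at_0 b g Hg), !(Cderiv_at_0 _ _ Hf), !(Cderiv_at_0 _ _ Hf1),
    !(Cderiv_at_0 _ _ Hf2), !(Cderiv_at_0 _ _ Hg), !(Cderiv_at_0 _ _ Hg1), !(Cderiv_at_0 _ _ Hg2).
  unfold deriv_coef. rewrite Ha1, Hb1, Hb0.
  repeat split; simpl; try ring;
    rewrite Cmult_1_l, ?Cmult_assoc, <- ?RtoC_mult; f_equal; f_equal; ring.
Qed.

Lemma inverse_coef_2 : b 2%nat = - a 2%nat.
Proof.
  pose proof (inverse_chain_2 0 ltac:(rewrite Cmod_0; lra)) as H.
  destruct inverse_values_at_0 as (Eg & E1 & E2 & _ & F1 & F2 & _).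
  rewrite Eg, E1, E2, F1, F2 in H.
  apply (Ceq_of_mul_sub_eq_0 2); [apply RtoC_neq_0; lra | rewrite <- H; ring].
Qed.

Lemma inverse_coef_3 : b 3%nat = 2 * a 2%nat * a 2%nat - a 3%nat.
Proof.
  pose proof inverse_chain_3 as H.
  destruct inverse_values_at_0 as (Eg & E1 & E2 & E3 & F1 & F2 & F3).
  rewrite Eg, E1, E2, E3, F1, F2, F3, inverse_coef_2 in H.
  apply (Ceq_of_mul_sub_eq_0 6); [apply RtoC_neq_0; lra | rewrite <- H; ring].
Qed.

End InverseCoefficients.

Lemma bi_univalent_pair_coef_3 (a b : nat -> C) (f g : C -> C) :
  bi_univalent_pair a f b g -> b 3%nat = 2 * a 2%nat * a 2%nat - a 3%nat.
Proof.
  intros [[_ [Ha1 Hf]] [_ [[Hb0 [Hb1 Hg]] [_ [r [Hr Hinv]]]]]].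
  apply (inverse_coef_3 a b f g (Rmin r 1)); auto.
  - split; [apply Rmin_pos; lra | apply Rmin_r].
  - intros w Hw. apply Hinv. pose proof (Rmin_l r 1). lra.
Qed.

(** * J_h as a power series *)

Lemma J_condition_derivs (tau : C) (lam gam : R) (delta : nat) (beta : R) (c : nat -> C) :
  J_condition tau lam gam delta beta c ->
  exists F, power_series_on_U (rusch_coef delta c) F /\
    forall z, inU z -> z <> 0 ->
      (beta < Re (J_expr tau lam gam F (Cderiv (rusch_coef delta c))
                         (Cderiv (deriv_coef (rusch_coef delta c))) z))%R.
Proof.
  intros [F [D1 [D2 [HF [HD1 [HD2 Hpos]]]]]].
  set (d := rusch_coef delta c) in *.
  assert (ED1 : forall z, inU z -> D1 z = Cderiv d z)
    by (intros z Hz; apply (is_derive_C_unique F z);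
        [apply HD1 | apply is_derive_power_series]; auto).
  assert (ED2 : forall z, inU z -> D2 z = Cderiv (deriv_coef d) z).
  { intros z Hz. apply (is_derive_C_unique (Cderiv d) z).
    - apply (is_derive_ext_loc D1); [|apply HD2; auto].
      apply (filter_imp inU); [intros t Ht; apply ED1, Ht|].
      apply (locally_Cmod_lt z 1 Hz).
    - apply is_derive_power_series; [apply (power_series_on_U_deriv d F HF) | auto]. }
  exists F. split; [exact HF|]. intros z Hz Hz0.
  unfold J_expr. rewrite <- ED1, <- ED2 by auto. exact (Hpos z Hz Hz0).
Qed.

Definition J_coef (tau : C) (lam gam : R) (delta : nat) (c : nat -> C) (k : nat) : C :=
  let d := rusch_coef delta c in
  / tau * ((1 - lam) * (1 - gam) * d (S k) + (lam * (gam + 1) + gam) * deriv_coef d k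
           + lam * gam * shift_coef (deriv_coef (deriv_coef d)) k)
  + (if Nat.eqb k 0 then 1 - / tau * (lam * gam * 2 + 1) else 0).

(* At z = 0, where [J_expr] involves the junk value F 0 / 0, h is the constant term. *)
Lemma J_condition_power_series (tau : C) (lam gam : R) (delta : nat) (beta : R) (c : nat -> C) :
  J_condition tau lam gam delta beta c ->
  exists h, power_series_on_U (J_coef tau lam gam delta c) h /\
    (forall z, inU z -> z <> 0 -> (beta < Re (h z))%R).
Proof.
  intros HJ. destruct (J_condition_derivs tau lam gam delta beta c HJ) as [F [HF Hpos]].
  set (d := rusch_coef delta c) in *.
  set (J := J_expr tau lam gam F (Cderiv d) (Cderiv (deriv_coef d))).
  exists (fun z => if Ceq_dec z 0 then J_coef tau lam gam delta c 0 else J z). split.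
  2: { intros z Hz Hz0. destruct (Ceq_dec z 0); [contradiction | apply Hpos; auto]. }
  intros z Hz. destruct (Ceq_dec z 0) as [->|Hz0]; [apply is_series_at_0|].
  assert (HF1 := power_series_on_U_deriv d F HF).
  assert (HF2 := power_series_on_U_deriv _ _ HF1).
  pose proof (is_series_plus _ _ _ _
     (is_series_scal (/ tau) _ _ (is_series_plus _ _ _ _ (is_series_plus _ _ _ _
        (is_series_scal ((1 - lam) * (1 - gam)) _ _ (is_series_div_z d F z HF eq_refl Hz Hz0))
        (is_series_scal (lam * (gam + 1) + gam) _ _ (HF1 z Hz)))
        (is_series_scal (lam * gam) _ _ (is_series_mul_z _ _ z HF2 Hz))))
     (is_series_single 0 (1 - / tau * (lam * gam * 2 + 1)))) as H.
  apply (is_series_C_ext _ _ _ _ H).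
  - intros k. unfold J_coef. fold d. unfold plus, scal; simpl. unfold mult; simpl.
    destruct k; simpl; ring.
  - unfold J, J_expr, plus, scal; simpl. unfold mult; simpl. ring.
Qed.

Lemma rusch_factor_1 delta : rusch_factor delta 1 = 1%R.
Proof.
  unfold rusch_factor. replace (delta + 1 - 1)%nat with delta by lia.
  pose proof (INR_fact_neq_0 delta). simpl. field. auto.
Qed.

Lemma rusch_factor_2 delta : rusch_factor delta 2 = (INR delta + 1)%R.
Proof.
  unfold rusch_factor. replace (delta + 2 - 1)%nat with (S delta) by lia.
  rewrite fact_simpl, mult_INR, S_INR.
  pose proof (INR_fact_neq_0 delta). simpl. field. auto.
Qed.

Lemma rusch_factor_3 delta : rusch_factor delta 3 = ((INR delta + 1) * (INR delta + 2) / 2)%R.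
Proof.
  unfold rusch_factor. replace (delta + 3 - 1)%nat with (S (S delta)) by lia.
  rewrite !fact_simpl, !mult_INR, !S_INR.
  pose proof (INR_fact_neq_0 delta). simpl. field. auto.
Qed.

Lemma J_coef_0 tau lam gam delta (c : nat -> C) :
  c 1%nat = 1 -> J_coef tau lam gam delta c 0 = 1.
Proof.
  intros Hc1. unfold J_coef, deriv_coef, shift_coef, rusch_coef.
  rewrite rusch_factor_1, Hc1. simpl. ring.
Qed.

Lemma J_coef_1 tau lam gam delta (c : nat -> C) :
  J_coef tau lam gam delta c 1 =
  / tau * ((1 + lam + gam + 5 * lam * gam) * (INR delta + 1))%R * c 2%nat.
Proof.
  unfold J_coef, deriv_coef, shift_coef, rusch_coef. rewrite rusch_factor_2.
  destruct (/ tau) as [p q], (c 2%nat) as [u v].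
  apply injective_projections; simpl; ring.
Qed.

Lemma J_coef_2 tau lam gam delta (c : nat -> C) :
  J_coef tau lam gam delta c 2 =
  / tau * ((1 + 2 * (lam + gam + 5 * lam * gam)) * ((INR delta + 1) * (INR delta + 2) / 2))%R
  * c 3%nat.
Proof.
  unfold J_coef, deriv_coef, shift_coef, rusch_coef. rewrite rusch_factor_3.
  destruct (/ tau) as [p q], (c 3%nat) as [u v].
  apply injective_projections; simpl; field.
Qed.

Lemma Cmod_scaled_le (tau : C) (K : R) (x : C) (B : R) : tau <> 0 ->
  (Cmod (/ tau * K * x) <= B)%R -> (Rabs K * Cmod x <= B * Cmod tau)%R.
Proof.
  intros Htau H. rewrite !Cmod_mult, Cmod_inv, Cmod_R in H by exact Htau.
  assert (Ht : (0 < Cmod tau)%R) by (apply Cmod_gt_0; exact Htau).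
  apply (Rmult_le_compat_r (Cmod tau)) in H; [|lra].
  replace (/ Cmod tau * Rabs K * Cmod x * Cmod tau)%R with (Rabs K * Cmod x)%R in H
    by (field; lra).
  exact H.
Qed.

Lemma J_condition_coef_bounds (tau : C) (lam gam : R) (delta : nat) (beta : R) (c : nat -> C) :
  tau <> 0 -> c 1%nat = 1 -> J_condition tau lam gam delta beta c ->
  (Rabs ((1 + lam + gam + 5 * lam * gam) * (INR delta + 1)) * Cmod (c 2%nat)
     <= 2 * (1 - beta) * Cmod tau)%R /\
  (Rabs ((1 + 2 * (lam + gam + 5 * lam * gam)) * ((INR delta + 1) * (INR delta + 2) / 2))
     * Cmod (c 3%nat) <= 2 * (1 - beta) * Cmod tau)%R.
Proof.
  intros Htau Hc1 HJ.
  destruct (J_condition_power_series tau lam gam delta beta c HJ) as [h [Hh Hpos]].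
  pose proof (J_coef_0 tau lam gam delta c Hc1) as He0.
  split; apply Cmod_scaled_le; auto.
  - rewrite <- J_coef_1. exact (caratheodory_coef_bound _ h beta 1 Hh He0 Hpos ltac:(lia)).
  - rewrite <- J_coef_2. exact (caratheodory_coef_bound _ h beta 2 Hh He0 Hpos ltac:(lia)).
Qed.

Lemma Cmod_sq_le_of_bounds (K B : R) (x y : C) :
  (K * Cmod (2 * x * x - y) <= B)%R -> (K * Cmod y <= B)%R -> (0 <= K)%R ->
  (K * (Cmod x * Cmod x) <= B)%R.
Proof.
  intros H1 H2 HK.
  assert (Htri : (Cmod (2 * x * x) <= Cmod (2 * x * x - y) + Cmod y)%R).
  { replace (2 * x * x) with ((2 * x * x - y) + y) at 1 by ring. apply Cmod_triangle. }
  rewrite !Cmod_mult, Cmod_RtoC_nonneg in Htri by lra.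
  apply (Rmult_le_compat_l K) in Htri; [lra | exact HK].
Qed.

Lemma le_2_sqrt_div (x A D : R) : (0 <= x)%R -> (0 < D)%R -> (x * x * D <= 4 * A)%R ->
  (x <= 2 * sqrt (A / D))%R.
Proof.
  intros Hx HD H.
  assert (HA : (0 <= A / D)%R) by (apply Rdiv_le_0_compat; nra).
  rewrite <- (sqrt_square x Hx), <- (sqrt_square 2), <- sqrt_mult by lra.
  apply sqrt_le_1_alt. apply Rle_div_r in H; [|exact HD]. unfold Rdiv in *. nra.
Qed.

Close Scope C_scope.
Close Scope R_scope.

Theorem corollary6 (lam gam beta : R) (tau : C) (delta : nat)
    (a : nat -> C) (f : C -> C) :
  (0 <= lam)%R -> (0 <= gam <= 1)%R -> (0 <= beta < 1)%R -> tau <> RtoC 0 ->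
  Theta_Sigma tau lam gam delta beta a f ->
  (Cmod (a 2%nat) <=
     Rmin (2 * Cmod tau * (1 - beta)
             / ((INR delta + 1) * (1 + lam + gam + 5 * lam * gam)))
          (2 * sqrt (Cmod tau * (1 - beta)
             / ((INR delta + 1) * (INR delta + 2)
                * (1 + 2 * (lam + gam + 5 * lam * gam))))))%R /\
  (Cmod (a 3%nat) <=
     4 * Cmod tau * (1 - beta)
       / ((INR delta + 1) * (INR delta + 2)
          * (1 + 2 * (lam + gam + 5 * lam * gam))))%R.
Proof.
  intros Hlam [Hgam _] [_ Hbeta] Htau [b [g [Hfg [HJa HJb]]]].
  pose proof Hfg as [[_ [Ha1 _]] [_ [[_ [Hb1 _]] _]]].
  destruct (J_condition_coef_bounds _ _ _ _ _ a Htau Ha1 HJa) as [Ha2 Ha3].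
  destruct (J_condition_coef_bounds _ _ _ _ _ b Htau Hb1 HJb) as [_ Hb3].
  rewrite (bi_univalent_pair_coef_3 a b f g Hfg) in Hb3.
  pose proof (pos_INR delta). pose proof (proj1 (Cmod_gt_0 tau) Htau).
  pose proof (Cmod_ge_0 (a 2%nat)). pose proof (Cmod_ge_0 (a 3%nat)).
  assert (0 <= lam * gam)%R by nra.
  rewrite !Rabs_pos_eq in Ha2, Ha3, Hb3 by nra.
  pose proof (Cmod_sq_le_of_bounds _ _ _ _ Hb3 Ha3 ltac:(apply Rmult_le_pos; nra)) as Ha2sq.
  split; [apply Rmin_glb|].
  - apply Rle_div_r; [unfold Rgt; nra | lra].
  - apply le_2_sqrt_div; [lra | nra | lra].
  - apply Rle_div_r; [unfold Rgt; nra | lra].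
Qed.
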